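(* If $G$ is a connected graph that is not $\omega$-evadible, then either $G$ is finite or $G$ has a vertex of infinite degree.
   Context: Cat Herding is played on a simple, possibly infinite graph $G$. The cat first places its token on a vertex. Then the players alternate, the herder moving first: the herder deletes one edge of the current graph, and then, unless the cat's current vertex has degree $0$ in the current graph, the cat moves its token along a finite path with at least one edge in the current graph to a different vertex. The cat is captured when its vertex has degree $0$ in the current graph. $G$ is $k$-evadible if the cat has a strategy (including its choice of starting vertex) that, against every herder strategy, yields a legal cat move after each of the first $k-1$ edge deletions; $G$ is $\omega$-evadible if it is $k$-evadible for every $k\in\mathbb{N}$. *)

From Stdlib Require Import List Relations.
Import ListNotations.

Record SimpleGraph := {
  vert :> Type;
  adj : vert -> vert -> Prop;
  adj_sym : forall x y, adj x y -> adj y x;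
  adj_irrefl : forall x, ~ adj x x
}.

(* The current graph after deleting the (unordered) edges listed in D. *)
Definition cur_adj (G : SimpleGraph) (D : list (G * G)) (x y : G) : Prop :=
  adj G x y /\ ~ In (x, y) D /\ ~ In (y, x) D.

Definition cat_move (G : SimpleGraph) (D : list (G * G)) (v w : G) : Prop :=
  w <> v /\ clos_trans G (cur_adj G D) v w.

(* survives G n D v : the cat sits at v, D has been deleted, the herder is to
   move; the cat can guarantee a legal move after each of the next n
   deletions. *)
Fixpoint survives (G : SimpleGraph) (n : nat) (D : list (G * G)) (v : G) : Prop :=
  match n with
  | O => True
  | S m => forall x y : G, cur_adj G D x y ->
             exists w, cat_move G ((x, y) :: D) v w /\ survives G m ((x, y) :: D) w
  end.

Definition k_evadible (G : SimpleGraph) (k : nat) : Prop :=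
  exists v : G, survives G (k - 1) [] v.

Definition omega_evadible (G : SimpleGraph) : Prop :=
  forall k : nat, k_evadible G k.

Definition connected (G : SimpleGraph) : Prop :=
  forall u v : G, clos_refl_trans G (adj G) u v.

Definition finite_graph (G : SimpleGraph) : Prop :=
  exists l : list G, forall v : G, In v l.

Definition infinite_degree (G : SimpleGraph) (v : G) : Prop :=
  ~ exists l : list G, forall w : G, adj G v w -> In w l.

(** The cat can survive [n] rounds on any simple path with [2 * 2^n] edges:
    sitting at the midpoint, after the herder deletes an edge the cat runs to
    the midpoint of a half of the path that the deleted edge does not touch,
    and repeats there with [n - 1].  A connected, infinite, locally finite
    graph contains arbitrarily long simple paths: the balls around a vertex
    are finite, so some vertex is arbitrarily far away, and a shortest walk
    to it is a simple path. *)

From Stdlib Require Import List Relations Classical Lia Arith Wf_nat.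
Import ListNotations.

Section CatHerding.
Variable G : SimpleGraph.

Definition walk (E : relation G) (w : nat -> G) (L : nat) : Prop :=
  forall q, q < L -> E (w q) (w (S q)).

Definition injective_upto (w : nat -> G) (L : nat) : Prop :=
  forall p q, p <= L -> q <= L -> w p = w q -> p = q.

Lemma clos_trans_sym (E : relation G) :
  (forall x y, E x y -> E y x) -> forall x y, clos_trans G E x y -> clos_trans G E y x.
Proof.
  intros HE x y Hxy; induction Hxy as [x y Hxy | x y z _ IHxy _ IHyz].
  - now apply t_step, HE.
  - exact (t_trans _ _ _ _ _ IHyz IHxy).
Qed.

Lemma walk_clos_trans (E : relation G) (w : nat -> G) i j :
  i < j -> (forall q, i <= q < j -> E (w q) (w (S q))) -> clos_trans G E (w i) (w j).
Proof.
  induction j as [|j IHj]; intros Hij Hw; [lia|].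
  destruct (Nat.eq_dec i j) as [<-|Hne].
  - apply t_step, Hw; lia.
  - apply t_trans with (w j); [apply IHj; intros; try apply Hw; lia|].
    apply t_step, Hw; lia.
Qed.

Lemma cur_adj_sym D x y : cur_adj G D x y -> cur_adj G D y x.
Proof. intros (Hxy & Hn1 & Hn2); repeat split; auto using adj_sym. Qed.

Lemma cur_adj_cons D x y u v :
  cur_adj G D u v -> ~ ((u, v) = (x, y) \/ (v, u) = (x, y)) ->
  cur_adj G ((x, y) :: D) u v.
Proof.
  intros (Huv & Hn1 & Hn2) Hne; repeat split; auto;
    intros [E|E]; auto; apply Hne; auto.
Qed.

Lemma injective_upto_edges_distinct w L p q x y :
  injective_upto w L -> p < L -> q < L -> p <> q ->
  (w p, w (S p)) = (x, y) \/ (w (S p), w p) = (x, y) ->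
  ~ ((w q, w (S q)) = (x, y) \/ (w (S q), w q) = (x, y)).
Proof.
  intros Hinj Hp Hq Hpq Hedge Hedge'.
  destruct Hedge as [E|E], Hedge' as [E'|E']; rewrite <- E' in E;
    injection E as E1 E2; apply Hinj in E1; apply Hinj in E2; lia.
Qed.

Lemma survives_midpoint n : forall D w,
  injective_upto w (2 * 2 ^ n) -> walk (cur_adj G D) w (2 * 2 ^ n) ->
  survives G n D (w (2 ^ n)).
Proof.
  induction n as [|n IHn]; intros D w Hinj Hw; [exact I|].
  simpl survives; intros x y _.
  rewrite Nat.pow_succ_r' in *; set (h := 2 ^ n) in *.
  replace (2 * (2 * h)) with (4 * h) in * by lia.
  assert (Hh : 0 < h) by (apply Nat.neq_0_lt_0, Nat.pow_nonzero; lia).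
  set (D' := (x, y) :: D).
  assert (Hmove : forall i j, i < j <= 4 * h ->
      (forall q, i <= q < j -> cur_adj G D' (w q) (w (S q))) ->
      cat_move G D' (w i) (w j) /\ cat_move G D' (w j) (w i)).
  { intros i j Hij Hkeep.
    assert (Hne : w j <> w i) by (intros E; apply Hinj in E; lia).
    assert (Hij' : clos_trans G (cur_adj G D') (w i) (w j))
      by (apply walk_clos_trans; auto; lia).
    split; split; auto using clos_trans_sym, cur_adj_sym. }
  destruct (classic (exists p, p < 2 * h /\
      ((w p, w (S p)) = (x, y) \/ (w (S p), w p) = (x, y)))) as [[p [Hp Hhit]] | Hmiss].
  - (* the deleted edge lies in the left half: escape to the right half *)
    assert (Hkeep : forall q, 2 * h <= q < 4 * h -> cur_adj G D' (w q) (w (S q))).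
    { intros q Hq; apply cur_adj_cons; [apply Hw; lia|].
      apply (injective_upto_edges_distinct w (4 * h) p); auto; lia. }
    exists (w (2 * h + h)); split.
    + apply (Hmove (2 * h) (2 * h + h)); [lia | intros q Hq; apply Hkeep; lia].
    + apply (IHn D' (fun i => w (2 * h + i))).
      * intros i j Hi Hj E; apply Hinj in E; lia.
      * intros q Hq; rewrite <- plus_n_Sm; apply Hkeep; lia.
  - assert (Hkeep : forall q, q < 2 * h -> cur_adj G D' (w q) (w (S q))).
    { intros q Hq; apply cur_adj_cons; [apply Hw; lia|].
      intros Hhit; apply Hmiss; eauto. }
    exists (w h); split.
    + apply (Hmove h (2 * h)); [lia | intros q Hq; apply Hkeep; lia].
    + apply IHn; [intros i j Hi Hj E; apply Hinj in E; lia|].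
      intros q Hq; apply Hkeep; lia.
Qed.

Lemma long_injective_walks_omega_evadible :
  (forall d, exists w, injective_upto w d /\ walk (adj G) w d) -> omega_evadible G.
Proof.
  intros Hlong k; destruct (Hlong (2 * 2 ^ (k - 1))) as [w [Hinj Hw]].
  exists (w (2 ^ (k - 1))); apply survives_midpoint; auto.
  intros q Hq; repeat split; auto.
Qed.

Lemma connected_walk x z : clos_refl_trans G (adj G) x z ->
  exists L w, w 0 = x /\ w L = z /\ walk (adj G) w L.
Proof.
  intros Hxz; apply clos_rt_rt1n_iff in Hxz.
  induction Hxz as [x | x y z Hxy _ (L & w & Hw0 & HwL & Hw)].
  - exists 0, (fun _ => x); repeat split; intros q Hq; lia.
  - exists (S L), (fun j => match j with 0 => x | S j' => w j' end).
    repeat split; auto; intros [|q] Hq; simpl.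
    + now rewrite Hw0.
    + apply Hw; lia.
Qed.

Lemma walk_shortcut (E : relation G) w L p q :
  walk E w L -> p < q <= L -> w p = w q ->
  exists w', w' 0 = w 0 /\ w' (L - (q - p)) = w L /\ walk E w' (L - (q - p)).
Proof.
  intros Hw Hpq Epq.
  exists (fun j => if le_lt_dec j p then w j else w (j + (q - p))).
  split; [reflexivity | split]; cbv beta.
  - destruct (le_lt_dec (L - (q - p)) p).
    + replace (L - (q - p)) with p by lia; rewrite Epq; f_equal; lia.
    + f_equal; lia.
  - intros j Hj; destruct (le_lt_dec j p), (le_lt_dec (S j) p); try lia.
    + apply Hw; lia.
    + replace j with p by lia; rewrite Epq.
      replace (S p + (q - p)) with (S q) by lia; apply Hw; lia.
    + replace (S j + (q - p)) with (S (j + (q - p))) by lia; apply Hw; lia.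
Qed.

Lemma shortest_walk_injective (E : relation G) w L :
  walk E w L ->
  (forall L' w', w' 0 = w 0 -> w' L' = w L -> walk E w' L' -> L <= L') ->
  injective_upto w L.
Proof.
  intros Hw Hmin.
  assert (Hlt : forall p q, p < q <= L -> w p <> w q).
  { intros p q Hpq Epq.
    destruct (walk_shortcut E w L p q Hw Hpq Epq) as (w' & H0 & HL & Hw').
    specialize (Hmin _ w' H0 HL Hw'); lia. }
  intros p q Hp Hq Epq; destruct (lt_eq_lt_dec p q) as [[Hpq|]|Hqp]; auto.
  - exfalso; apply (Hlt p q); auto; lia.
  - exfalso; apply (Hlt q p); auto; lia.
Qed.

Lemma walk_shorten_injective (E : relation G) x z :
  (exists L w, w 0 = x /\ w L = z /\ walk E w L) ->
  exists L w, w 0 = x /\ w L = z /\ walk E w L /\ injective_upto w L.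
Proof.
  intros Hex.
  set (P := fun L => exists w, w 0 = x /\ w L = z /\ walk E w L).
  destruct (dec_inh_nat_subset_has_unique_least_element P (fun L => classic (P L)) Hex)
    as (L & [(w & Hw0 & HwL & Hw) Hmin] & _).
  exists L, w; repeat split; auto.
  apply (shortest_walk_injective E); auto.
  intros L' w' H0 HL Hw'; apply Hmin; exists w'; split; [|split]; congruence || exact Hw'.
Qed.

Section LocallyFinite.
Hypothesis locally_finite : forall v : G, exists l : list G, forall w, adj G v w -> In w l.

Lemma neighbours_of_list (l : list G) :
  exists l', forall x, In x l -> forall y, adj G x y -> In y l'.
Proof.
  induction l as [|a l [l' Hl']]; [exists []; intros x []|].
  destruct (locally_finite a) as [la Ha].
  exists (la ++ l'); intros x [<-|Hx] y Hxy; apply in_or_app; eauto.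
Qed.

Lemma walk_endpoints_finite (r : G) d :
  exists l, forall w L, L <= d -> walk (adj G) w L -> w 0 = r -> In (w L) l.
Proof.
  induction d as [|d [l Hl]].
  - exists [r]; intros w L HL _ Hw0; replace L with 0 by lia; now left.
  - destruct (neighbours_of_list l) as [l' Hl'].
    exists (l ++ l'); intros w L HL Hw Hw0; apply in_or_app.
    destruct (le_lt_dec L d).
    + left; eauto.
    + right; replace L with (S d) by lia; apply (Hl' (w d)).
      * apply Hl; auto; intros q Hq; apply Hw; lia.
      * apply Hw; lia.
Qed.

Lemma long_injective_walks :
  connected G -> ~ finite_graph G ->
  forall d, exists w, injective_upto w d /\ walk (adj G) w d.
Proof.
  intros Hconn Hinf d.
  assert (Hfar : forall l : list G, exists u, ~ In u l).
  { intros l; apply NNPP; intros Hall; apply Hinf; exists l.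
    intros v; apply NNPP; eauto. }
  destruct (Hfar []) as [r _].
  destruct (walk_endpoints_finite r d) as [l Hl].
  destruct (Hfar l) as [u Hu].
  destruct (walk_shorten_injective (adj G) r u (connected_walk r u (Hconn r u)))
    as (L & w & Hw0 & HwL & Hw & Hinj).
  assert (d < L) by (destruct (le_lt_dec L d); auto; subst u; exfalso; eauto).
  exists w; split.
  - intros p q Hp Hq; apply Hinj; lia.
  - intros q Hq; apply Hw; lia.
Qed.

End LocallyFinite.
End CatHerding.

Theorem mainTheorem20 (G : SimpleGraph) :
  connected G -> ~ omega_evadible G ->
  finite_graph G \/ exists v : G, infinite_degree G v.
Proof.
  intros Hconn Hnot.
  destruct (classic (finite_graph G)) as [Hfin|Hinf]; [now left | right].
  apply NNPP; intros Hdeg; apply Hnot, long_injective_walks_omega_evadible.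
  apply long_injective_walks; auto.
  intros v; apply NNPP; intros Hv; apply Hdeg; now exists v.
Qed.
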